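(* Let $\alpha\neq0$ and $u_0>0$ be real numbers. The initial value problem $$\left(r\frac{u'}{\sqrt{1-u'^2}}\right)'=r\frac{\alpha}{u\sqrt{1-u'^2}}\quad\text{for } r\in(0,\delta),\qquad u(0)=u_0,\quad u'(0)=0,$$ has a solution $u\in C^2([0,\delta])$ for some $\delta>0$, and this solution depends continuously on the initial data. *)

From Stdlib Require Import Reals.
From Coquelicot Require Import Coquelicot.
Open Scope R_scope.

Definition Icc (a b : R) (x : R) : Prop := a <= x <= b.

Definition has_deriv_within (D : R -> Prop) (f : R -> R) (x l : R) : Prop :=
  filterlim (fun y => (f y - f x) / (y - x))
    (within (fun y => D y /\ y <> x) (locally x)) (locally l).

Definition continuous_within (D : R -> Prop) (g : R -> R) (x : R) : Prop :=
  filterlim g (within D (locally x)) (locally (g x)).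

Definition C2_on (a b : R) (u u1 u2 : R -> R) : Prop :=
  forall x, Icc a b x ->
    has_deriv_within (Icc a b) u x (u1 x) /\
    has_deriv_within (Icc a b) u1 x (u2 x) /\
    continuous_within (Icc a b) u2 x.

(* u (with derivative u1) is a C^2([0,delta]) solution of
     (r u'/sqrt(1-u'^2))' = r alpha / (u sqrt(1-u'^2))   on (0,delta),
     u(0) = u0, u'(0) = 0.
   The expressions make sense: u > 0 and |u'| < 1 on [0,delta]. *)
Definition is_solution (alpha u0 delta : R) (u u1 : R -> R) : Prop :=
  (exists u2, C2_on 0 delta u u1 u2) /\
  (forall r, Icc 0 delta r -> 0 < u r /\ Rabs (u1 r) < 1) /\
  (forall r, 0 < r < delta ->
     is_derive (fun s => s * u1 s / sqrt (1 - (u1 s) ^ 2)) r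
               (r * alpha / (u r * sqrt (1 - (u1 r) ^ 2)))) /\
  u 0 = u0 /\ u1 0 = 0.

From Stdlib Require Import Reals Lra Lia.
From Coquelicot Require Import Coquelicot.
Open Scope R_scope.

(* Writing p = u' / sqrt (1 - u'^2), so that u' = p / sqrt (1 + p^2) and
   1 / sqrt (1 - u'^2) = sqrt (1 + p^2), the problem becomes the integral system
     u r = u0 + int_0^r p / sqrt (1 + p^2),
     p r = (1/r) int_0^r s F (p s, u s) ds,   F (p, u) = alpha sqrt (1 + p^2) / u.
   After clipping p to [-1,1] and u from below by u0/4, F is globally Lipschitz, and
   for |r| <= delta the factor r in front of the Lipschitz constant makes Picard
   iteration a contraction of ratio 1/2 in the sup norm, uniformly in the initial
   value; the same estimate makes the solution 2-Lipschitz in u0. The a priori bounds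
   |p| <= 1/2 and u >= u0/2 show that the truncation is never active. The mean
   (1/r) int_0^r s F is differentiable also at r = 0, with derivative F(0)/2, which
   gives u'' a continuous extension to the singular point r = 0. *)

Lemma continuous_epsilon_delta (f : R -> R) x :
  continuous f x <->
  forall eps, 0 < eps -> exists d, 0 < d /\
    forall y, Rabs (y - x) < d -> Rabs (f y - f x) < eps.
Proof.
  split.
  - intros H eps He. apply filterlim_locally with (eps := mkposreal eps He) in H.
    destruct H as [d Hd]. exists d. split; [apply cond_pos|].
    intros y Hy. apply (Hd y Hy).
  - intros H. apply filterlim_locally. intros eps.
    destruct (H eps (cond_pos eps)) as [d [Hd H']].
    exists (mkposreal d Hd). intros y Hy. apply H'. apply Hy.
Qed.

Lemma continuous_Rmult (f g : R -> R) x :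
  continuous f x -> continuous g x -> continuous (fun y => f y * g y) x.
Proof. intros. apply (continuous_mult (K:=R_AbsRing)); assumption. Qed.

Lemma continuous_Rminus (f g : R -> R) x :
  continuous f x -> continuous g x -> continuous (fun y => f y - g y) x.
Proof. intros. apply (continuous_minus (V:=R_NormedModule)); assumption. Qed.

Lemma continuous_Rplus (f g : R -> R) x :
  continuous f x -> continuous g x -> continuous (fun y => f y + g y) x.
Proof. intros. apply (continuous_plus (V:=R_NormedModule)); assumption. Qed.

Lemma continuous_of_is_derive (f : R -> R) x l : is_derive f x l -> continuous f x.
Proof.
  intros H. apply (ex_derive_continuous (K:=R_AbsRing) (V:=R_NormedModule)).
  exists l. exact H.
Qed.

Lemma is_derive_const_plus (f : R -> R) c x l :
  is_derive f x l -> is_derive (fun y => c + f y) x l.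
Proof.
  intros H. assert (H' := is_derive_plus (fun _ => c) f x 0 l (is_derive_const c x) H).
  unfold plus in H'; simpl in H'. rewrite Rplus_0_l in H'. exact H'.
Qed.

Lemma continuous_of_dist_le (H P U : R -> R) L x : 0 <= L ->
  (forall y, Rabs (H y - H x) <= L * (Rabs (P y - P x) + Rabs (U y - U x))) ->
  continuous P x -> continuous U x -> continuous H x.
Proof.
  intros HL Hl HP HU. apply continuous_epsilon_delta. intros eps He.
  rewrite continuous_epsilon_delta in HP, HU.
  assert (He' : 0 < eps / (2 * (L + 1))) by (apply Rdiv_lt_0_compat; lra).
  destruct (HP _ He') as [d1 [Hd1 H1]]. destruct (HU _ He') as [d2 [Hd2 H2]].
  exists (Rmin d1 d2). split; [apply Rmin_glb_lt; assumption|].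
  intros y Hy. assert (A1 := H1 y (Rlt_le_trans _ _ _ Hy (Rmin_l _ _))).
  assert (A2 := H2 y (Rlt_le_trans _ _ _ Hy (Rmin_r _ _))).
  eapply Rle_lt_trans; [apply Hl|].
  apply Rle_lt_trans with (L * (2 * (eps / (2 * (L + 1))))).
  - apply Rmult_le_compat_l; lra.
  - replace (L * (2 * (eps / (2 * (L + 1))))) with (eps - eps / (L + 1)) by (field; lra).
    assert (0 < eps / (L + 1)) by (apply Rdiv_lt_0_compat; lra). lra.
Qed.

Lemma locally_Rabs_lt x rho : Rabs x < rho -> locally x (fun y => Rabs y < rho).
Proof.
  intros Hx. assert (He : 0 < rho - Rabs x) by lra.
  exists (mkposreal _ He). intros y Hy. change (Rabs (y - x) < rho - Rabs x) in Hy.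
  revert Hx Hy. unfold Rabs; repeat destruct Rcase_abs; lra.
Qed.

Lemma has_deriv_within_of_is_derive (D : R -> Prop) f x l :
  is_derive f x l -> has_deriv_within D f x l.
Proof.
  intros H. apply is_derive_Reals in H. unfold has_deriv_within.
  apply filterlim_locally. intros eps. destruct (H eps (cond_pos eps)) as [d Hd].
  exists d. intros y Hy [_ Hyx]. change (Rabs (y - x) < d) in Hy.
  change (Rabs ((f y - f x) / (y - x) - l) < eps).
  replace y with (x + (y - x)) at 1 by ring. apply Hd; [lra|exact Hy].
Qed.

Lemma continuous_within_of_continuous (D : R -> Prop) g x :
  continuous g x -> continuous_within D g x.
Proof.
  intros H. unfold continuous_within. eapply filterlim_filter_le_1; [|exact H].
  apply filter_le_within.
Qed.

Lemma ex_RInt_0 (f : R -> R) r :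
  (forall s, Rabs s <= Rabs r -> continuous f s) -> ex_RInt f 0 r.
Proof.
  intros Hf. apply (ex_RInt_continuous (V:=R_CompleteNormedModule)). intros z Hz. apply Hf.
  unfold Rmin, Rmax in Hz. destruct (Rle_dec 0 r); revert Hz; unfold Rabs;
    repeat destruct Rcase_abs; lra.
Qed.

Lemma RInt_0_minus (f g : R -> R) r :
  (forall s, Rabs s <= Rabs r -> continuous f s) ->
  (forall s, Rabs s <= Rabs r -> continuous g s) ->
  RInt (fun s => f s - g s) 0 r = RInt f 0 r - RInt g 0 r.
Proof.
  intros Hf Hg.
  exact (RInt_minus (V:=R_CompleteNormedModule) f g 0 r (ex_RInt_0 f r Hf) (ex_RInt_0 g r Hg)).
Qed.

Lemma abs_RInt_0_le (f : R -> R) r K :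
  (forall s, Rabs s <= Rabs r -> continuous f s) ->
  (forall s, Rabs s <= Rabs r -> Rabs (f s) <= K) ->
  Rabs (RInt f 0 r) <= Rabs r * K.
Proof.
  intros Hc Hb. assert (Hex := ex_RInt_0 f r Hc).
  destruct (Rle_dec 0 r) as [Hr|Hr].
  - replace (Rabs r) with (r - 0) by (rewrite Rabs_right; lra).
    apply abs_RInt_le_const; [exact Hr|exact Hex|].
    intros t Ht. apply Hb. unfold Rabs; repeat destruct Rcase_abs; lra.
  - assert (Hex' : ex_RInt f r 0) by (apply ex_RInt_swap; exact Hex).
    rewrite <- opp_RInt_swap by exact Hex'.
    change (Rabs (- RInt f r 0) <= Rabs r * K). rewrite Rabs_Ropp.
    replace (Rabs r) with (0 - r) by (rewrite Rabs_left; lra).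
    apply abs_RInt_le_const; [lra|exact Hex'|].
    intros t Ht. apply Hb. unfold Rabs; repeat destruct Rcase_abs; lra.
Qed.

Lemma is_derive_RInt_0 (f : R -> R) rho x :
  (forall s, Rabs s < rho -> continuous f s) -> Rabs x < rho ->
  is_derive (fun y => RInt f 0 y) x (f x).
Proof.
  intros Hc Hx.
  apply (is_derive_RInt (V:=R_NormedModule) f (fun y => RInt f 0 y) 0 x); [|apply Hc, Hx].
  apply (filter_imp (fun b => Rabs b < rho)); [|apply locally_Rabs_lt, Hx].
  intros b Hb. apply (RInt_correct (V:=R_CompleteNormedModule)).
  apply ex_RInt_0. intros s Hs. apply Hc. lra.
Qed.

Lemma continuous_RInt_0 (f : R -> R) :
  (forall s, continuous f s) -> forall x, continuous (fun y => RInt f 0 y) x.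
Proof.
  intros H x. apply continuous_of_is_derive with (f x).
  apply (is_derive_RInt_0 f (Rabs x + 1)); [intros s _; apply H|lra].
Qed.

Lemma is_lim_seq_abs_le (x : nat -> R) (l a K : R) :
  is_lim_seq x l -> (forall n, Rabs (x n - a) <= K) -> Rabs (l - a) <= K.
Proof.
  intros Hl Hb.
  assert (H : is_lim_seq (fun n => Rabs (x n - a)) (Rabs (l - a))).
  { apply (is_lim_seq_abs _ (Finite (l - a))).
    apply is_lim_seq_minus'; [exact Hl|apply is_lim_seq_const]. }
  exact (is_lim_seq_le _ _ _ _ Hb H (is_lim_seq_const K)).
Qed.

Lemma geometric_cauchy_tail (x : nat -> R) :
  (forall n, Rabs (x (S n) - x n) <= (/2) ^ n) ->
  forall n m, Rabs (x (n + m)%nat - x n) <= 2 * ((/2) ^ n - (/2) ^ (n + m)).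
Proof.
  intros Hx n m. induction m as [|m IH].
  - rewrite Nat.add_0_r, !Rminus_diag, Rabs_R0. lra.
  - rewrite Nat.add_succ_r.
    replace (x (S (n + m)) - x n)
      with ((x (S (n + m)) - x (n + m)%nat) + (x (n + m)%nat - x n)) by ring.
    eapply Rle_trans; [apply Rabs_triang|].
    assert (E : (/2) ^ S (n + m) = /2 * (/2) ^ (n + m)) by reflexivity.
    specialize (Hx (n + m)%nat). lra.
Qed.

Lemma geometric_cauchy_lim (x : nat -> R) :
  (forall n, Rabs (x (S n) - x n) <= (/2) ^ n) ->
  is_lim_seq x (real (Lim_seq x)) /\
  forall n, Rabs (x n - real (Lim_seq x)) <= 2 * (/2) ^ n.
Proof.
  intros Hx.
  assert (Ht : forall n m, Rabs (x (n + m)%nat - x n) <= 2 * (/2) ^ n).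
  { intros n m. eapply Rle_trans; [apply geometric_cauchy_tail, Hx|].
    assert (0 < (/2) ^ (n + m)) by (apply pow_lt; lra). lra. }
  assert (Hc : ex_lim_seq_cauchy x).
  { intros eps. assert (Ha : Rabs (/2) < 1) by (rewrite Rabs_right; lra).
    assert (He : 0 < eps / 4) by (generalize (cond_pos eps); lra).
    destruct (pow_lt_1_zero _ Ha _ He) as [N HN].
    exists N. intros n m Hn Hm.
    specialize (HN N (le_n N)). rewrite Rabs_right in HN by (apply Rle_ge, pow_le; lra).
    assert (A1 := Ht N (n - N)%nat). assert (A2 := Ht N (m - N)%nat).
    replace (N + (n - N))%nat with n in A1 by lia.
    replace (N + (m - N))%nat with m in A2 by lia.
    replace (x n - x m) with ((x n - x N) - (x m - x N)) by ring.
    eapply Rle_lt_trans; [apply Rabs_triang|]. rewrite Rabs_Ropp. lra. }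
  apply ex_lim_seq_cauchy_corr in Hc. destruct Hc as [l Hl].
  rewrite (is_lim_seq_unique _ _ Hl). simpl. split; [exact Hl|].
  intros n. rewrite Rabs_minus_sym. apply (is_lim_seq_abs_le (fun m => x (m + n)%nat)).
  - apply (is_lim_seq_incr_n x n l). exact Hl.
  - intros m. rewrite Nat.add_comm. apply Ht.
Qed.

Lemma is_lim_seq_geometric_unique (x : nat -> R) (l a C : R) :
  is_lim_seq x l -> (forall n, Rabs (x n - a) <= C * (/2) ^ n) -> l = a.
Proof.
  intros Hl Hb.
  assert (G : is_lim_seq (fun n => C * (/2) ^ n) 0).
  { replace (Finite 0) with (Rbar_mult C 0) by (simpl; f_equal; ring).
    apply is_lim_seq_scal_l. apply is_lim_seq_geom. rewrite Rabs_right; lra. }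
  assert (Ha : is_lim_seq x a).
  { apply is_lim_seq_le_le with (u := fun n => a - C * (/2) ^ n) (w := fun n => a + C * (/2) ^ n).
    - intros n. specialize (Hb n). revert Hb. unfold Rabs; destruct Rcase_abs; lra.
    - replace (Finite a) with (Finite (a - 0)) by (f_equal; ring).
      apply is_lim_seq_minus'; [apply is_lim_seq_const|exact G].
    - replace (Finite a) with (Finite (a + 0)) by (f_equal; ring).
      apply is_lim_seq_plus'; [apply is_lim_seq_const|exact G]. }
  apply is_lim_seq_unique in Hl. apply is_lim_seq_unique in Ha.
  rewrite Hl in Ha. injection Ha. auto.
Qed.

Lemma continuous_geometric_limit (f : nat -> R -> R) (h : R -> R) x e C : 0 < e ->
  (forall n, continuous (f n) x) ->
  (forall n y, Rabs (y - x) < e -> Rabs (f n y - h y) <= C * (/2) ^ n) ->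
  continuous h x.
Proof.
  intros He Hc Hb. apply continuous_epsilon_delta. intros eps Heps.
  assert (Ha : Rabs (/2) < 1) by (rewrite Rabs_right; lra).
  assert (HC := Rabs_pos C).
  assert (Hy : 0 < eps / (3 * (Rabs C + 1))) by (apply Rdiv_lt_0_compat; lra).
  destruct (pow_lt_1_zero _ Ha _ Hy) as [N HN]. specialize (HN N (le_n N)).
  rewrite Rabs_right in HN by (apply Rle_ge, pow_le; lra).
  assert (HCN : C * (/2) ^ N < eps / 3).
  { assert (0 < (/2) ^ N) by (apply pow_lt; lra).
    apply Rle_lt_trans with (Rabs C * (/2) ^ N).
    - apply Rmult_le_compat_r; [lra|apply Rle_abs].
    - apply Rlt_le_trans with ((Rabs C + 1) * (eps / (3 * (Rabs C + 1)))).
      + nra.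
      + right. field. lra. }
  assert (Hf := Hc N). rewrite continuous_epsilon_delta in Hf.
  destruct (Hf (eps / 3)) as [d [Hd Hfd]]; [lra|].
  exists (Rmin d e). split; [apply Rmin_glb_lt; assumption|].
  intros y Hyx.
  assert (A1 := Hfd y (Rlt_le_trans _ _ _ Hyx (Rmin_l _ _))).
  assert (A2 := Hb N y (Rlt_le_trans _ _ _ Hyx (Rmin_r _ _))).
  assert (A3 := Hb N x ltac:(rewrite Rminus_diag, Rabs_R0; lra)).
  replace (h y - h x) with (- (f N y - h y) + (f N y - f N x) + (f N x - h x)) by ring.
  eapply Rle_lt_trans; [apply Rabs_triang|].
  eapply Rle_lt_trans; [apply Rplus_le_compat_r, Rabs_triang|].
  rewrite Rabs_Ropp. lra.
Qed.

(* At r = 0 division by zero gives 0, which is also the limit at 0. *)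
Definition wmean (f : R -> R) (r : R) := RInt (fun s => s * f s) 0 r / r.

Lemma wmean_0 (f : R -> R) : wmean f 0 = 0.
Proof. unfold wmean. rewrite RInt_point. unfold Rdiv. rewrite Rinv_0. apply Rmult_0_r. Qed.

Lemma mul_wmean (f : R -> R) r : r * wmean f r = RInt (fun s => s * f s) 0 r.
Proof.
  unfold wmean. destruct (Req_dec r 0) as [->|Hr].
  - rewrite RInt_point. unfold zero; simpl. ring.
  - field. exact Hr.
Qed.

Lemma wmean_const c y : y <> 0 -> wmean (fun _ => c) y = c * y / 2.
Proof.
  intros Hy. unfold wmean.
  replace (RInt (fun s => s * c) 0 y) with (c * (y * y) / 2 - c * (0 * 0) / 2).
  - field. exact Hy.
  - symmetry. apply is_RInt_unique.
    apply (is_RInt_derive (V:=R_CompleteNormedModule) (fun s => c * (s * s) / 2)).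
    + intros z _. auto_derive; [exact I|field].
    + intros z _. apply continuous_Rmult; [apply continuous_id|apply continuous_const].
Qed.

Lemma wmean_minus (f g : R -> R) r :
  (forall s, Rabs s <= Rabs r -> continuous f s) ->
  (forall s, Rabs s <= Rabs r -> continuous g s) ->
  wmean f r - wmean g r = wmean (fun s => f s - g s) r.
Proof.
  intros Hf Hg. unfold wmean.
  assert (E : RInt (fun s => s * (f s - g s)) 0 r = RInt (fun s => s * f s - s * g s) 0 r).
  { apply RInt_ext. intros s _. change (s * (f s - g s) = s * f s - s * g s :> R). ring. }
  rewrite E, RInt_0_minus.
  - unfold Rdiv. ring.
  - intros s Hs. apply continuous_Rmult; [apply continuous_id|apply Hf, Hs].
  - intros s Hs. apply continuous_Rmult; [apply continuous_id|apply Hg, Hs].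
Qed.

Lemma abs_wmean_le (f : R -> R) r K :
  (forall s, Rabs s <= Rabs r -> continuous f s) ->
  (forall s, Rabs s <= Rabs r -> Rabs (f s) <= K) ->
  Rabs (wmean f r) <= Rabs r * K.
Proof.
  intros Hc Hb.
  assert (HI : Rabs (RInt (fun s => s * f s) 0 r) <= Rabs r * (Rabs r * K)).
  { apply abs_RInt_0_le.
    - intros s Hs. apply continuous_Rmult; [apply continuous_id|apply Hc, Hs].
    - intros s Hs. rewrite Rabs_mult.
      apply Rmult_le_compat; [apply Rabs_pos|apply Rabs_pos|exact Hs|apply Hb, Hs]. }
  unfold wmean. destruct (Req_dec r 0) as [->|Hr].
  - unfold Rdiv. rewrite Rinv_0, Rmult_0_r, Rabs_R0 in *. lra.
  - unfold Rdiv. rewrite Rabs_mult, Rabs_inv.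
    assert (0 < Rabs r) by (apply Rabs_pos_lt, Hr).
    apply Rmult_le_reg_r with (Rabs r); [assumption|].
    rewrite Rmult_assoc, Rinv_l, Rmult_1_r by lra. lra.
Qed.

Lemma continuous_wmean (f : R -> R) K :
  (forall s, continuous f s) -> (forall s, Rabs (f s) <= K) ->
  forall x, continuous (wmean f) x.
Proof.
  intros Hc Hb x. destruct (Req_dec x 0) as [->|Hx].
  - assert (HK : 0 <= K) by (eapply Rle_trans; [apply Rabs_pos|apply (Hb 0)]).
    apply continuous_epsilon_delta. intros eps He.
    exists (eps / (K + 1)). split; [apply Rdiv_lt_0_compat; lra|].
    intros y Hy. rewrite Rminus_0_r in Hy. rewrite wmean_0, Rminus_0_r.
    eapply Rle_lt_trans; [apply abs_wmean_le; intros s _; [apply Hc|apply Hb]|].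
    apply Rle_lt_trans with (eps / (K + 1) * K).
    + apply Rmult_le_compat_r; lra.
    + replace (eps / (K + 1) * K) with (eps - eps / (K + 1)) by (field; lra).
      assert (0 < eps / (K + 1)) by (apply Rdiv_lt_0_compat; lra). lra.
  - unfold wmean. apply (continuous_Rmult (fun r => RInt (fun s => s * f s) 0 r) (fun r => / r)).
    + apply continuous_RInt_0. intros s. apply continuous_Rmult; [apply continuous_id|apply Hc].
    + apply continuous_Rinv, Hx.
Qed.

Section WeightedMeanDerivative.

Variables (f : R -> R) (rho : R).
Hypothesis f_cont : forall s, Rabs s < rho -> continuous f s.
Hypothesis rho_pos : 0 < rho.

Lemma wmean_div_id_cvg eps : 0 < eps ->
  exists d, 0 < d /\ forall y, y <> 0 -> Rabs y < d -> Rabs (wmean f y / y - f 0 / 2) < eps.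
Proof.
  intros He. assert (H0 : continuous f 0) by (apply f_cont; rewrite Rabs_R0; exact rho_pos).
  rewrite continuous_epsilon_delta in H0. destruct (H0 (eps / 2)) as [d [Hd Hfd]]; [lra|].
  exists (Rmin d rho). split; [apply Rmin_glb_lt; assumption|]. intros y Hy0 Hy.
  assert (Hyd := Rlt_le_trans _ _ _ Hy (Rmin_l _ _)).
  assert (Hyr := Rlt_le_trans _ _ _ Hy (Rmin_r _ _)).
  assert (E : wmean f y / y - f 0 / 2 = wmean (fun s => f s - f 0) y / y).
  { rewrite <- (wmean_minus f (fun _ => f 0) y).
    - rewrite wmean_const by exact Hy0. field. exact Hy0.
    - intros s Hs. apply f_cont. lra.
    - intros s Hs. apply continuous_const. }
  assert (B : Rabs (wmean (fun s => f s - f 0) y) <= Rabs y * (eps / 2)).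
  { apply abs_wmean_le.
    - intros s Hs. apply continuous_Rminus; [apply f_cont; lra|apply continuous_const].
    - intros s Hs. destruct (Req_dec s 0) as [->|Hs0]; [rewrite Rminus_diag, Rabs_R0; lra|].
      left. apply Hfd. rewrite Rminus_0_r. lra. }
  rewrite E. unfold Rdiv. rewrite Rabs_mult, Rabs_inv.
  assert (Hy' : 0 < Rabs y) by (apply Rabs_pos_lt, Hy0).
  apply Rmult_lt_reg_r with (Rabs y); [exact Hy'|].
  rewrite Rmult_assoc, Rinv_l, Rmult_1_r by lra. nra.
Qed.

Definition wmean' (r : R) := if Req_EM_T r 0 then f 0 / 2 else f r - wmean f r / r.

Lemma is_derive_wmean x : Rabs x < rho -> is_derive (wmean f) x (wmean' x).
Proof.
  intros Hx. unfold wmean'. destruct (Req_EM_T x 0) as [->|Hx0].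
  - apply is_derive_Reals. intros eps He.
    destruct (wmean_div_id_cvg eps He) as [d [Hd Hd']].
    exists (mkposreal d Hd). intros h Hh0 Hhd. simpl in Hhd.
    rewrite Rplus_0_l, wmean_0, Rminus_0_r. apply Hd'; assumption.
  - unfold wmean.
    replace (f x - RInt (fun s => s * f s) 0 x / x / x)
      with ((x * f x * x - RInt (fun s => s * f s) 0 x * 1) / x ^ 2) by (field; exact Hx0).
    apply is_derive_div; [| |exact Hx0].
    + apply (is_derive_RInt_0 (fun s => s * f s) rho); [|exact Hx].
      intros s Hs. apply continuous_Rmult; [apply continuous_id|apply f_cont, Hs].
    + auto_derive; auto.
Qed.

Lemma continuous_wmean' x : Rabs x < rho -> continuous wmean' x.
Proof.
  intros Hx. destruct (Req_dec x 0) as [->|Hx0].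
  - apply continuous_epsilon_delta. intros eps He.
    assert (Hf0 := f_cont 0 Hx). rewrite continuous_epsilon_delta in Hf0.
    destruct (Hf0 (eps / 2)) as [d1 [Hd1 H1]]; [lra|].
    destruct (wmean_div_id_cvg (eps / 2)) as [d2 [Hd2 H2]]; [lra|].
    exists (Rmin d1 d2). split; [apply Rmin_glb_lt; assumption|].
    intros y Hy. rewrite Rminus_0_r in Hy.
    unfold wmean'. destruct (Req_EM_T 0 0) as [_|C]; [|congruence].
    destruct (Req_EM_T y 0) as [->|Hy0]; [rewrite Rminus_diag, Rabs_R0; lra|].
    replace (f y - wmean f y / y - f 0 / 2)
      with ((f y - f 0) - (wmean f y / y - f 0 / 2)) by lra.
    eapply Rle_lt_trans; [apply Rabs_triang|]. rewrite Rabs_Ropp.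
    assert (A1 := H1 y ltac:(rewrite Rminus_0_r; exact (Rlt_le_trans _ _ _ Hy (Rmin_l _ _)))).
    assert (A2 := H2 y Hy0 (Rlt_le_trans _ _ _ Hy (Rmin_r _ _))). lra.
  - apply continuous_ext_loc with (g := fun y => f y - wmean f y * / y).
    + assert (He : 0 < Rabs x) by (apply Rabs_pos_lt, Hx0).
      exists (mkposreal _ He). intros y Hy. change (Rabs (y - x) < Rabs x) in Hy.
      unfold wmean'. destruct (Req_EM_T y 0) as [->|_]; [|reflexivity].
      exfalso. rewrite Rminus_0_l, Rabs_Ropp in Hy. lra.
    + apply continuous_Rminus; [apply f_cont, Hx|].
      apply continuous_Rmult; [|apply continuous_Rinv, Hx0].
      apply continuous_of_is_derive with (wmean' x). apply is_derive_wmean, Hx.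
Qed.

End WeightedMeanDerivative.

(* With p the relativistic-type momentum u' / sqrt (1 - u'^2), [lorentz p] is the
   factor 1 / sqrt (1 - u'^2) and [velocity p] recovers u'. *)
Definition lorentz (p : R) := sqrt (1 + p ^ 2).
Definition velocity (p : R) := p / lorentz p.
Definition velocity' (p : R) := / (lorentz p * lorentz p * lorentz p).

Lemma lorentz_mul_self p : lorentz p * lorentz p = 1 + p * p.
Proof. unfold lorentz. rewrite sqrt_sqrt; [ring|nra]. Qed.

Lemma one_le_lorentz p : 1 <= lorentz p.
Proof.
  unfold lorentz. apply Rle_trans with (sqrt 1); [rewrite sqrt_1; lra|].
  apply sqrt_le_1_alt. nra.
Qed.

Lemma Rabs_lt_lorentz p : Rabs p < lorentz p.
Proof.
  assert (H := lorentz_mul_self p). assert (H1 := one_le_lorentz p).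
  assert (Rabs p * Rabs p = p * p) by (rewrite <- Rabs_mult; apply Rabs_right; nra).
  generalize (Rabs_pos p). nra.
Qed.

Lemma lorentz_le_2 p : Rabs p <= 1 -> lorentz p <= 2.
Proof.
  intros Hp. assert (H := lorentz_mul_self p). assert (H1 := one_le_lorentz p).
  assert (Rabs p * Rabs p = p * p) by (rewrite <- Rabs_mult; apply Rabs_right; nra).
  generalize (Rabs_pos p). nra.
Qed.

Lemma lorentz_lipschitz a b : Rabs (lorentz a - lorentz b) <= Rabs (a - b).
Proof.
  assert (Ha := lorentz_mul_self a). assert (Hb := lorentz_mul_self b).
  assert (Ha1 := one_le_lorentz a). assert (Hb1 := one_le_lorentz b).
  assert (Haa := Rabs_lt_lorentz a). assert (Hbb := Rabs_lt_lorentz b).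
  set (A := lorentz a) in *. set (B := lorentz b) in *.
  assert (E : Rabs (A - B) * (A + B) = Rabs (a - b) * Rabs (a + b)).
  { rewrite <- (Rabs_right (A + B)) at 1 by lra. rewrite <- !Rabs_mult.
    f_equal. nra. }
  assert (Hab : Rabs (a + b) <= A + B) by (eapply Rle_trans; [apply Rabs_triang|lra]).
  apply Rmult_le_reg_r with (A + B); [lra|]. rewrite E.
  apply Rmult_le_compat_l; [apply Rabs_pos|exact Hab].
Qed.

Lemma abs_velocity_lt_1 p : Rabs (velocity p) < 1.
Proof.
  assert (H1 := one_le_lorentz p). assert (Hp := Rabs_lt_lorentz p).
  unfold velocity, Rdiv. rewrite Rabs_mult, Rabs_inv, (Rabs_right (lorentz p)) by lra.
  apply Rmult_lt_reg_r with (lorentz p); [lra|].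
  rewrite Rmult_assoc, Rinv_l by lra. lra.
Qed.

Lemma velocity_lipschitz a b : Rabs (velocity a - velocity b) <= 2 * Rabs (a - b).
Proof.
  assert (HA1 := one_le_lorentz a). assert (HB1 := one_le_lorentz b).
  assert (Ha := Rabs_lt_lorentz a). assert (Hl := lorentz_lipschitz b a).
  unfold velocity. set (A := lorentz a) in *. set (B := lorentz b) in *.
  replace (a / A - b / B) with ((a * (B - A) + (a - b) * A) / (A * B)) by (field; lra).
  unfold Rdiv. rewrite Rabs_mult, Rabs_inv, (Rabs_right (A * B)) by nra.
  apply Rmult_le_reg_r with (A * B); [nra|]. rewrite Rmult_assoc, Rinv_l, Rmult_1_r by nra.
  eapply Rle_trans; [apply Rabs_triang|]. rewrite !Rabs_mult, (Rabs_right A) by lra.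
  rewrite (Rabs_minus_sym b a) in Hl.
  assert (Rabs a * Rabs (B - A) <= A * Rabs (a - b))
    by (apply Rmult_le_compat; [apply Rabs_pos|apply Rabs_pos|lra|exact Hl]).
  assert (0 <= Rabs (a - b)) by apply Rabs_pos.
  assert (0 <= A * Rabs (a - b) * (B - 1)) by (apply Rmult_le_pos; [apply Rmult_le_pos|]; lra).
  nra.
Qed.

Lemma is_derive_velocity p : is_derive velocity p (velocity' p).
Proof.
  unfold velocity, velocity', lorentz. assert (H0 : 0 < 1 + p ^ 2) by nra.
  assert (H1 := sqrt_lt_R0 _ H0).
  assert (E : sqrt (1 + p ^ 2) * sqrt (1 + p ^ 2) = 1 + p ^ 2) by (apply sqrt_sqrt; lra).
  auto_derive.
  - replace (p * (p * 1)) with (p ^ 2) by ring. repeat split; lra.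
  - replace (p * (p * 1)) with (p ^ 2) by ring. set (S := sqrt (1 + p ^ 2)) in *.
    replace (/ (S * S * S)) with ((S * S - p ^ 2) / (S * S * S)) by (rewrite E; field; lra).
    field; lra.
Qed.

Lemma continuous_velocity' p : continuous velocity' p.
Proof.
  apply (ex_derive_continuous (K:=R_AbsRing) (V:=R_NormedModule)). unfold velocity', lorentz.
  assert (H0 : 0 < 1 + p ^ 2) by nra. assert (H1 := sqrt_lt_R0 _ H0).
  auto_derive. replace (p * (p * 1)) with (p ^ 2) by ring. repeat split; try lra.
  assert (0 < sqrt (1 + p ^ 2) * sqrt (1 + p ^ 2) * sqrt (1 + p ^ 2))
    by (repeat apply Rmult_lt_0_compat; lra).
  lra.
Qed.

Lemma continuous_velocity_comp (P : R -> R) x :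
  continuous P x -> continuous (fun s => velocity (P s)) x.
Proof.
  intros HP. apply (continuous_comp P velocity); [exact HP|].
  apply continuous_of_is_derive with (velocity' (P x)). apply is_derive_velocity.
Qed.

Lemma sqrt_1_minus_velocity_sq p : sqrt (1 - velocity p ^ 2) = / lorentz p.
Proof.
  assert (E := lorentz_mul_self p). assert (H1 := one_le_lorentz p).
  replace (1 - velocity p ^ 2) with (/ lorentz p * / lorentz p).
  - apply sqrt_square. left. apply Rinv_0_lt_compat. lra.
  - unfold velocity. field_simplify; [|lra|lra].
    replace (lorentz p ^ 2) with (1 + p * p) by (rewrite <- E; ring). field. nra.
Qed.

Lemma mul_velocity_div_sqrt c p : c * velocity p / sqrt (1 - velocity p ^ 2) = c * p.
Proof.
  rewrite sqrt_1_minus_velocity_sq. assert (H1 := one_le_lorentz p).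
  unfold velocity. field. lra.
Qed.

Definition clip (p : R) := Rmax (-1) (Rmin p 1).

Lemma clip_lipschitz a b : Rabs (clip a - clip b) <= Rabs (a - b).
Proof. unfold clip, Rmax, Rmin. repeat destruct Rle_dec; unfold Rabs; repeat destruct Rcase_abs; lra. Qed.

Lemma clip_id p : Rabs p <= 1 -> clip p = p.
Proof.
  unfold clip, Rmax, Rmin. intros H.
  repeat destruct Rle_dec; revert H; unfold Rabs; repeat destruct Rcase_abs; lra.
Qed.

Lemma abs_clip_le_1 p : Rabs (clip p) <= 1.
Proof. unfold clip, Rmax, Rmin. repeat destruct Rle_dec; unfold Rabs; repeat destruct Rcase_abs; lra. Qed.

Lemma Rmax_l_lipschitz a b c : Rabs (Rmax a c - Rmax b c) <= Rabs (a - b).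
Proof. unfold Rmax. repeat destruct Rle_dec; unfold Rabs; repeat destruct Rcase_abs; lra. Qed.

Section TruncatedSystem.

Variables alpha u0 : R.
Hypothesis u0_pos : 0 < u0.

Definition rhs (p u : R) := alpha * lorentz (clip p) / Rmax u (u0 / 4).
Definition rhs_bound := 2 * Rabs alpha / (u0 / 4).
Definition rhs_lip := Rabs alpha * (/ (u0 / 4) + 2 / (u0 / 4 * (u0 / 4))).

Lemma Rabs_rhs_le p u : Rabs (rhs p u) <= rhs_bound.
Proof.
  unfold rhs, rhs_bound.
  assert (Hc : u0 / 4 <= Rmax u (u0 / 4)) by apply Rmax_r.
  assert (H2 := lorentz_le_2 _ (abs_clip_le_1 p)). assert (H1 := one_le_lorentz (clip p)).
  unfold Rdiv. rewrite !Rabs_mult, Rabs_inv, (Rabs_right (lorentz _)), (Rabs_right (Rmax _ _)) by lra.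
  assert (/ Rmax u (u0 * / 4) <= / (u0 * / 4)) by (apply Rinv_le_contravar; lra).
  assert (0 < / Rmax u (u0 * / 4)) by (apply Rinv_0_lt_compat; lra).
  assert (HA := Rabs_pos alpha).
  apply Rmult_le_compat; nra.
Qed.

Lemma rhs_bound_ge0 : 0 <= rhs_bound.
Proof. eapply Rle_trans; [apply Rabs_pos|apply (Rabs_rhs_le 0 0)]. Qed.

Lemma rhs_lip_ge0 : 0 <= rhs_lip.
Proof.
  unfold rhs_lip. apply Rmult_le_pos; [apply Rabs_pos|].
  assert (0 < / (u0 / 4)) by (apply Rinv_0_lt_compat; lra).
  assert (0 < 2 / (u0 / 4 * (u0 / 4))) by (apply Rdiv_lt_0_compat; nra). lra.
Qed.

Lemma rhs_bound_le_lip : rhs_bound <= 2 * rhs_lip.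
Proof.
  unfold rhs_bound, rhs_lip. assert (HA := Rabs_pos alpha).
  assert (0 < 2 / (u0 / 4 * (u0 / 4))) by (apply Rdiv_lt_0_compat; nra).
  unfold Rdiv at 1. nra.
Qed.

Lemma rhs_lipschitz p u p' u' :
  Rabs (rhs p u - rhs p' u') <= rhs_lip * (Rabs (p - p') + Rabs (u - u')).
Proof.
  unfold rhs, rhs_lip. set (c := u0 / 4).
  assert (Hc : 0 < c) by (unfold c; lra).
  set (H := lorentz (clip p)). set (H' := lorentz (clip p')).
  set (I := Rmax u c). set (I' := Rmax u' c).
  assert (HI : c <= I) by apply Rmax_r. assert (HI' : c <= I') by apply Rmax_r.
  assert (HH' : H' <= 2) by apply (lorentz_le_2 _ (abs_clip_le_1 p')).
  assert (HH1' : 1 <= H') by apply one_le_lorentz.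
  assert (LH : Rabs (H - H') <= Rabs (p - p'))
    by (eapply Rle_trans; [apply lorentz_lipschitz|apply clip_lipschitz]).
  assert (LI : Rabs (I' - I) <= Rabs (u - u'))
    by (rewrite Rabs_minus_sym; apply Rmax_l_lipschitz).
  replace (alpha * H / I - alpha * H' / I')
    with (alpha * ((H - H') * / I + H' * (I' - I) * / (I * I'))) by (field; lra).
  rewrite Rabs_mult, (Rmult_assoc (Rabs alpha)).
  apply Rmult_le_compat_l; [apply Rabs_pos|].
  eapply Rle_trans; [apply Rabs_triang|]. rewrite !Rabs_mult, !Rabs_inv.
  rewrite (Rabs_right I), (Rabs_right H'), (Rabs_right (I * I')) by nra.
  assert (A1 : / I <= / c) by (apply Rinv_le_contravar; lra).
  assert (A2 : / (I * I') <= / (c * c)) by (apply Rinv_le_contravar; nra).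
  assert (0 < / I) by (apply Rinv_0_lt_compat; lra).
  assert (0 < / (I * I')) by (apply Rinv_0_lt_compat; nra).
  assert (B1 : Rabs (H - H') * / I <= Rabs (p - p') * / c)
    by (apply Rmult_le_compat; [apply Rabs_pos|lra|exact LH|exact A1]).
  assert (B2 : H' * Rabs (I' - I) * / (I * I') <= 2 * Rabs (u - u') * / (c * c)).
  { apply Rmult_le_compat; [apply Rmult_le_pos; [lra|apply Rabs_pos]|lra| |exact A2].
    apply Rmult_le_compat; [lra|apply Rabs_pos|exact HH'|exact LI]. }
  unfold Rdiv. generalize (Rabs_pos (p - p')) (Rabs_pos (u - u')). nra.
Qed.

Lemma continuous_rhs_comp (U P : R -> R) x :
  continuous U x -> continuous P x -> continuous (fun s => rhs (P s) (U s)) x.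
Proof.
  intros HU HP. apply (continuous_of_dist_le _ P U rhs_lip); [apply rhs_lip_ge0| |exact HP|exact HU].
  intros y. apply rhs_lipschitz.
Qed.

(* 1/4 and 1/(4 rhs_lip + 1) make both components of a Picard step contract by 1/2;
   u0/4 keeps u above u0/2. *)
Definition radius := Rmin (Rmin (1 / 4) (u0 / 4)) (/ (4 * rhs_lip + 1)).

Lemma radius_pos : 0 < radius.
Proof.
  assert (HL := rhs_lip_ge0).
  unfold radius. repeat apply Rmin_glb_lt; try lra. apply Rinv_0_lt_compat. lra.
Qed.

Lemma radius_le_quarter : radius <= 1 / 4.
Proof. unfold radius. eapply Rle_trans; apply Rmin_l. Qed.

Lemma radius_le_u0 : radius <= u0 / 4.
Proof. unfold radius. eapply Rle_trans; [apply Rmin_l|apply Rmin_r]. Qed.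

Lemma radius_mul_lip : radius * rhs_lip <= 1 / 4.
Proof.
  assert (HL := rhs_lip_ge0).
  apply Rle_trans with (/ (4 * rhs_lip + 1) * rhs_lip).
  - apply Rmult_le_compat_r; [exact HL|apply Rmin_r].
  - apply Rmult_le_reg_l with (4 * rhs_lip + 1); [lra|].
    rewrite <- Rmult_assoc, Rinv_r by lra. lra.
Qed.

Lemma rhs_bound_mul_le r : Rabs r <= radius -> rhs_bound * Rabs r <= 1 / 2.
Proof.
  intros Hr. assert (H := radius_mul_lip). assert (HM := rhs_bound_ge0).
  assert (HML := rhs_bound_le_lip). assert (Hr0 := Rabs_pos r).
  apply Rle_trans with (2 * rhs_lip * radius); [|lra].
  apply Rmult_le_compat; lra.
Qed.

Definition stepU (v : R) (P : R -> R) (r : R) := v + RInt (fun s => velocity (P s)) 0 r.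
Definition stepP (U P : R -> R) := wmean (fun s => rhs (P s) (U s)).

Fixpoint picard (v : R) (n : nat) : (R -> R) * (R -> R) :=
  match n with
  | O => (fun _ => v, fun _ => 0)
  | S n => (stepU v (snd (picard v n)), stepP (fst (picard v n)) (snd (picard v n)))
  end.

Lemma continuous_stepU v P : (forall x, continuous P x) -> forall x, continuous (stepU v P) x.
Proof.
  intros HP x. unfold stepU. apply continuous_Rplus; [apply continuous_const|].
  apply continuous_RInt_0. intros s. apply continuous_velocity_comp, HP.
Qed.

Lemma continuous_stepP U P :
  (forall x, continuous U x) -> (forall x, continuous P x) -> forall x, continuous (stepP U P) x.
Proof.
  intros HU HP. apply (continuous_wmean _ rhs_bound).
  - intros s. apply continuous_rhs_comp; [apply HU|apply HP].
  - intros s. apply Rabs_rhs_le.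
Qed.

Lemma stepU_dist v v' P P' r e :
  (forall s, Rabs s <= Rabs r -> continuous P s /\ continuous P' s) ->
  (forall s, Rabs s <= Rabs r -> Rabs (P s - P' s) <= e) ->
  Rabs (stepU v P r - stepU v' P' r) <= Rabs (v - v') + Rabs r * (2 * e).
Proof.
  intros Hc Hb. unfold stepU.
  assert (E : forall a b, v + a - (v' + b) = (v - v') + (a - b)) by (intros; ring).
  rewrite E. eapply Rle_trans; [apply Rabs_triang|]. apply Rplus_le_compat_l.
  rewrite <- RInt_0_minus
    by (intros s Hs; destruct (Hc s Hs); apply continuous_velocity_comp; assumption).
  apply abs_RInt_0_le.
  - intros s Hs. destruct (Hc s Hs).
    apply continuous_Rminus; apply continuous_velocity_comp; assumption.
  - intros s Hs. eapply Rle_trans; [apply velocity_lipschitz|]. specialize (Hb s Hs). lra.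
Qed.

Lemma stepP_dist U P U' P' r e :
  (forall s, Rabs s <= Rabs r ->
     continuous U s /\ continuous P s /\ continuous U' s /\ continuous P' s) ->
  (forall s, Rabs s <= Rabs r -> Rabs (U s - U' s) <= e /\ Rabs (P s - P' s) <= e) ->
  Rabs (stepP U P r - stepP U' P' r) <= Rabs r * (rhs_lip * (2 * e)).
Proof.
  intros Hc Hb. unfold stepP.
  rewrite wmean_minus
    by (intros s Hs; destruct (Hc s Hs) as (? & ? & ? & ?); apply continuous_rhs_comp; assumption).
  apply abs_wmean_le.
  - intros s Hs. destruct (Hc s Hs) as (? & ? & ? & ?).
    apply continuous_Rminus; apply continuous_rhs_comp; assumption.
  - intros s Hs. destruct (Hb s Hs). eapply Rle_trans; [apply rhs_lipschitz|].
    apply Rmult_le_compat_l; [apply rhs_lip_ge0|lra].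
Qed.

Lemma step_contraction v v' U P U' P' r e : Rabs r <= radius ->
  (forall s, Rabs s <= Rabs r ->
     continuous U s /\ continuous P s /\ continuous U' s /\ continuous P' s) ->
  (forall s, Rabs s <= Rabs r -> Rabs (U s - U' s) <= e /\ Rabs (P s - P' s) <= e) ->
  Rabs (stepU v P r - stepU v' P' r) <= Rabs (v - v') + e / 2 /\
  Rabs (stepP U P r - stepP U' P' r) <= e / 2.
Proof.
  intros Hr Hc Hb.
  assert (He : 0 <= e).
  { destruct (Hb 0) as [H _]; [rewrite Rabs_R0; apply Rabs_pos|].
    eapply Rle_trans; [apply Rabs_pos|exact H]. }
  assert (Hq := radius_le_quarter). assert (HL0 := rhs_lip_ge0).
  assert (HL : Rabs r * rhs_lip <= 1 / 4).
  { apply Rle_trans with (radius * rhs_lip); [apply Rmult_le_compat_r; lra|apply radius_mul_lip]. }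
  split.
  - eapply Rle_trans; [apply stepU_dist|].
    + intros s Hs. destruct (Hc s Hs) as (_ & ? & _ & ?). split; assumption.
    + intros s Hs. apply (Hb s Hs).
    + assert (Rabs r * (2 * e) <= 1 / 4 * (2 * e)) by (apply Rmult_le_compat_r; lra). lra.
  - eapply Rle_trans; [apply stepP_dist; [exact Hc|exact Hb]|]. nra.
Qed.

Lemma continuous_picard v n :
  (forall x, continuous (fst (picard v n)) x) /\ (forall x, continuous (snd (picard v n)) x).
Proof.
  induction n as [|n [IHU IHP]]; cbn [picard fst snd].
  - split; intros x; apply continuous_const.
  - split; [apply continuous_stepU|apply continuous_stepP]; assumption.
Qed.

Lemma continuous_picard2 v w m n s :
  continuous (fst (picard v m)) s /\ continuous (snd (picard v m)) s /\
  continuous (fst (picard w n)) s /\ continuous (snd (picard w n)) s.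
Proof.
  destruct (continuous_picard v m) as [H1 H2]. destruct (continuous_picard w n) as [H3 H4].
  repeat split; auto.
Qed.

Lemma picard_bounds v n r :
  Rabs (fst (picard v n) r - v) <= Rabs r /\ Rabs (snd (picard v n) r) <= rhs_bound * Rabs r.
Proof.
  destruct n as [|n]; cbn [picard fst snd].
  - rewrite Rminus_diag, Rabs_R0. split; [apply Rabs_pos|].
    apply Rmult_le_pos; [apply rhs_bound_ge0|apply Rabs_pos].
  - destruct (continuous_picard v n) as [HU HP]. split.
    + unfold stepU. assert (E : forall a, v + a - v = a) by (intros; ring). rewrite E.
      rewrite <- (Rmult_1_r (Rabs r)). apply abs_RInt_0_le.
      * intros s _. apply continuous_velocity_comp, HP.
      * intros s _. left. apply abs_velocity_lt_1.
    + rewrite Rmult_comm. unfold stepP. apply abs_wmean_le.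
      * intros s _. apply continuous_rhs_comp; [apply HU|apply HP].
      * intros s _. apply Rabs_rhs_le.
Qed.

Lemma picard_cauchy v n r : Rabs r <= radius ->
  Rabs (fst (picard v (S n)) r - fst (picard v n) r) <= (/2) ^ n /\
  Rabs (snd (picard v (S n)) r - snd (picard v n) r) <= (/2) ^ n.
Proof.
  revert r. induction n as [|n IH]; intros r Hr.
  - destruct (picard_bounds v 1 r) as [B1 B2]. cbn [picard fst snd] in B1, B2 |- *.
    assert (Hq := radius_le_quarter). assert (HM := rhs_bound_mul_le r Hr).
    rewrite pow_O, Rminus_0_r. split; lra.
  - destruct (step_contraction v v _ _ _ _ r ((/2) ^ n) Hr
                (fun s _ => continuous_picard2 v v (S n) n s)) as [A1 A2].
    { intros s Hs. apply IH. lra. }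
    rewrite Rminus_diag, Rabs_R0 in A1. cbn [picard fst snd pow] in A1, A2 |- *. split; lra.
Qed.

Lemma picard_lipschitz v w n r : Rabs r <= radius ->
  Rabs (fst (picard w n) r - fst (picard v n) r) <= 2 * Rabs (w - v) /\
  Rabs (snd (picard w n) r - snd (picard v n) r) <= 2 * Rabs (w - v).
Proof.
  assert (Hwv := Rabs_pos (w - v)).
  revert r. induction n as [|n IH]; intros r Hr.
  - cbn [picard fst snd]. rewrite Rminus_0_r, Rabs_R0. split; lra.
  - destruct (step_contraction w v _ _ _ _ r (2 * Rabs (w - v)) Hr
                (fun s _ => continuous_picard2 w v n n s)) as [A1 A2].
    { intros s Hs. apply IH. lra. }
    cbn [picard fst snd] in A1, A2 |- *. split; lra.
Qed.

Definition solU (v r : R) := real (Lim_seq (fun n => fst (picard v n) r)).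
Definition solP (v r : R) := real (Lim_seq (fun n => snd (picard v n) r)).

Lemma picard_cvg v r : Rabs r <= radius ->
  (is_lim_seq (fun n => fst (picard v n) r) (solU v r) /\
   forall n, Rabs (fst (picard v n) r - solU v r) <= 2 * (/2) ^ n) /\
  (is_lim_seq (fun n => snd (picard v n) r) (solP v r) /\
   forall n, Rabs (snd (picard v n) r - solP v r) <= 2 * (/2) ^ n).
Proof.
  intros Hr. split; apply geometric_cauchy_lim; intros n; apply (picard_cauchy v n r Hr).
Qed.

Lemma sol_bounds v r : Rabs r <= radius ->
  Rabs (solU v r - v) <= Rabs r /\ Rabs (solP v r) <= rhs_bound * Rabs r.
Proof.
  intros Hr. destruct (picard_cvg v r Hr) as [[LU _] [LP _]]. split.
  - apply (is_lim_seq_abs_le _ _ _ _ LU). intros n. apply picard_bounds.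
  - rewrite <- (Rminus_0_r (solP v r)). apply (is_lim_seq_abs_le _ _ _ _ LP).
    intros n. rewrite Rminus_0_r. apply picard_bounds.
Qed.

Lemma sol_lipschitz v w r : Rabs r <= radius ->
  Rabs (solU w r - solU v r) <= 2 * Rabs (w - v) /\
  Rabs (solP w r - solP v r) <= 2 * Rabs (w - v).
Proof.
  intros Hr. destruct (picard_cvg v r Hr) as [[LUv _] [LPv _]].
  destruct (picard_cvg w r Hr) as [[LUw _] [LPw _]].
  split; rewrite <- (Rminus_0_r (_ - _)).
  - apply (is_lim_seq_abs_le _ _ _ _ (is_lim_seq_minus' _ _ _ _ LUw LUv)).
    intros n. rewrite Rminus_0_r. apply picard_lipschitz, Hr.
  - apply (is_lim_seq_abs_le _ _ _ _ (is_lim_seq_minus' _ _ _ _ LPw LPv)).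
    intros n. rewrite Rminus_0_r. apply picard_lipschitz, Hr.
Qed.

Lemma continuous_sol v x : Rabs x < radius ->
  continuous (solU v) x /\ continuous (solP v) x.
Proof.
  intros Hx. assert (He : 0 < radius - Rabs x) by lra.
  assert (Hy : forall y, Rabs (y - x) < radius - Rabs x -> Rabs y <= radius)
    by (intros y; unfold Rabs; repeat destruct Rcase_abs; lra).
  split.
  - apply (continuous_geometric_limit (fun n => fst (picard v n)) _ x _ 2 He).
    + intros n. apply continuous_picard.
    + intros n y Hyx. apply (picard_cvg v y (Hy y Hyx)).
  - apply (continuous_geometric_limit (fun n => snd (picard v n)) _ x _ 2 He).
    + intros n. apply continuous_picard.
    + intros n y Hyx. apply (picard_cvg v y (Hy y Hyx)).
Qed.

Lemma sol_fixpoint v r : Rabs r < radius ->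
  solU v r = stepU v (solP v) r /\ solP v r = stepP (solU v) (solP v) r.
Proof.
  intros Hr. destruct (picard_cvg v r) as [[LU _] [LP _]]; [lra|].
  apply is_lim_seq_incr_1 in LU. apply is_lim_seq_incr_1 in LP.
  assert (Hstep : forall n,
    Rabs (stepU v (snd (picard v n)) r - stepU v (solP v) r) <= Rabs (v - v) + 2 * (/2) ^ n / 2 /\
    Rabs (stepP (fst (picard v n)) (snd (picard v n)) r - stepP (solU v) (solP v) r)
      <= 2 * (/2) ^ n / 2).
  { intros n. apply step_contraction; [lra| |].
    - intros s Hs. destruct (continuous_picard v n) as [C1 C2].
      destruct (continuous_sol v s) as [C3 C4]; [lra|]. repeat split; auto.
    - intros s Hs. destruct (picard_cvg v s) as [[_ B1] [_ B2]]; [lra|]. split; auto. }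
  rewrite Rminus_diag, Rabs_R0 in Hstep.
  split; [apply (is_lim_seq_geometric_unique _ _ _ 1 LU)|apply (is_lim_seq_geometric_unique _ _ _ 1 LP)];
    intros n; destruct (Hstep n) as [A1 A2].
  - eapply Rle_trans; [exact A1|lra].
  - eapply Rle_trans; [exact A2|lra].
Qed.

Lemma solU_0 v : solU v 0 = v.
Proof.
  rewrite (proj1 (sol_fixpoint v 0 ltac:(rewrite Rabs_R0; apply radius_pos))).
  unfold stepU. rewrite RInt_point. unfold zero; simpl. ring.
Qed.

Definition solF (v s : R) := rhs (solP v s) (solU v s).

Lemma solP_eq_wmean v r : Rabs r < radius -> solP v r = wmean (solF v) r.
Proof. intros Hr. apply (sol_fixpoint v r Hr). Qed.

Lemma solP_0 v : solP v 0 = 0.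
Proof. rewrite solP_eq_wmean by (rewrite Rabs_R0; apply radius_pos). apply wmean_0. Qed.

Lemma continuous_solF v x : Rabs x < radius -> continuous (solF v) x.
Proof. intros Hx. destruct (continuous_sol v x Hx). apply continuous_rhs_comp; assumption. Qed.

Lemma is_derive_solU v x : Rabs x < radius -> is_derive (solU v) x (velocity (solP v x)).
Proof.
  intros Hx. apply is_derive_ext_loc with (f := stepU v (solP v)).
  - apply (filter_imp (fun y => Rabs y < radius)); [|apply locally_Rabs_lt, Hx].
    intros y Hy. symmetry. apply (sol_fixpoint v y Hy).
  - unfold stepU. apply is_derive_const_plus.
    apply (is_derive_RInt_0 (fun s => velocity (solP v s)) radius); [|exact Hx].
    intros s Hs. apply continuous_velocity_comp, (continuous_sol v s Hs).
Qed.

Lemma is_derive_solP v x : Rabs x < radius -> is_derive (solP v) x (wmean' (solF v) x).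
Proof.
  intros Hx. apply is_derive_ext_loc with (f := wmean (solF v)).
  - apply (filter_imp (fun y => Rabs y < radius)); [|apply locally_Rabs_lt, Hx].
    intros y Hy. symmetry. apply solP_eq_wmean, Hy.
  - apply (is_derive_wmean _ radius); [apply continuous_solF|apply radius_pos|exact Hx].
Qed.

Lemma is_derive_velocity_solP v x : Rabs x < radius ->
  is_derive (fun r => velocity (solP v r)) x (velocity' (solP v x) * wmean' (solF v) x).
Proof.
  intros Hx. rewrite Rmult_comm.
  apply (is_derive_comp velocity (solP v) x); [apply is_derive_velocity|apply is_derive_solP, Hx].
Qed.

Lemma continuous_velocity'_solP v x : Rabs x < radius ->
  continuous (fun r => velocity' (solP v r) * wmean' (solF v) r) x.
Proof.
  intros Hx. apply continuous_Rmult.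
  - apply (continuous_comp (solP v) velocity');
      [apply (continuous_sol v x Hx)|apply continuous_velocity'].
  - apply (continuous_wmean' _ radius); [apply continuous_solF|apply radius_pos|exact Hx].
Qed.

Lemma half_u0_lt_solU v r : Rabs (v - u0) < u0 / 4 -> Rabs r <= radius -> u0 / 2 < solU v r.
Proof.
  intros Hv Hr. destruct (sol_bounds v r Hr) as [B _]. assert (H := radius_le_u0).
  revert Hv Hr B. unfold Rabs; repeat destruct Rcase_abs; lra.
Qed.

Lemma sol_ode v r : Rabs (v - u0) < u0 / 4 -> Rabs r < radius ->
  is_derive (fun s => s * velocity (solP v s) / sqrt (1 - velocity (solP v s) ^ 2)) r
    (r * alpha / (solU v r * sqrt (1 - velocity (solP v r) ^ 2))).
Proof.
  intros Hv Hr.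
  assert (HU := half_u0_lt_solU v r Hv ltac:(lra)).
  assert (HP : Rabs (solP v r) <= 1).
  { destruct (sol_bounds v r) as [_ B]; [lra|]. assert (H := rhs_bound_mul_le r ltac:(lra)). lra. }
  apply is_derive_ext with (f := fun s => s * solP v s).
  { intros s. symmetry. apply mul_velocity_div_sqrt. }
  apply is_derive_ext_loc with (f := fun s => RInt (fun t => t * solF v t) 0 s).
  { apply (filter_imp (fun y => Rabs y < radius)); [|apply locally_Rabs_lt, Hr].
    intros y Hy. rewrite solP_eq_wmean by exact Hy. symmetry. apply mul_wmean. }
  replace (r * alpha / (solU v r * sqrt (1 - velocity (solP v r) ^ 2))) with (r * solF v r).
  - apply (is_derive_RInt_0 (fun t => t * solF v t) radius); [|exact Hr].
    intros s Hs. apply continuous_Rmult; [apply continuous_id|apply continuous_solF, Hs].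
  - unfold solF, rhs. rewrite clip_id, Rmax_left, sqrt_1_minus_velocity_sq by lra.
    assert (H1 := one_le_lorentz (solP v r)). field. lra.
Qed.

End TruncatedSystem.

Theorem theorem3p2 (alpha u0 : R) (Halpha : alpha <> 0) (Hu0 : 0 < u0) :
  exists (delta eta : R) (U U1 : R -> R -> R),
    0 < delta /\ 0 < eta /\
    (forall v0, Rabs (v0 - u0) < eta -> is_solution alpha v0 delta (U v0) (U1 v0)) /\
    (forall v0, Rabs (v0 - u0) < eta ->
       forall eps, 0 < eps -> exists rho, 0 < rho /\
         forall w0, Rabs (w0 - u0) < eta -> Rabs (w0 - v0) < rho ->
           forall r, Icc 0 delta r ->
             Rabs (U w0 r - U v0 r) < eps /\ Rabs (U1 w0 r - U1 v0 r) < eps).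
Proof.
  assert (Hrad := radius_pos alpha u0 Hu0).
  exists (radius alpha u0 / 2), (u0 / 4), (solU alpha u0), (fun v r => velocity (solP alpha u0 v r)).
  assert (Hin : forall r, Icc 0 (radius alpha u0 / 2) r -> Rabs r < radius alpha u0)
    by (intros r [? ?]; rewrite Rabs_right; lra).
  split; [lra|]. split; [lra|]. split.
  - intros v Hv. split; [|split; [|split; [|split]]].
    + exists (fun r => velocity' (solP alpha u0 v r) * wmean' (solF alpha u0 v) r).
      intros x Hx. specialize (Hin x Hx). split; [|split].
      * apply has_deriv_within_of_is_derive, is_derive_solU; assumption.
      * apply has_deriv_within_of_is_derive, is_derive_velocity_solP; assumption.
      * apply continuous_within_of_continuous, continuous_velocity'_solP; assumption.
    + intros r Hr. split; [|apply abs_velocity_lt_1].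
      assert (H := half_u0_lt_solU alpha u0 Hu0 v r Hv ltac:(specialize (Hin r Hr); lra)). lra.
    + intros r Hr. apply sol_ode; [assumption|assumption|rewrite Rabs_right; lra].
    + apply solU_0, Hu0.
    + rewrite solP_0 by exact Hu0. unfold velocity, Rdiv. apply Rmult_0_l.
  - intros v Hv eps He. exists (eps / 5). split; [lra|]. intros w Hw Hwv r Hr.
    destruct (sol_lipschitz alpha u0 Hu0 v w r) as [D1 D2]; [specialize (Hin r Hr); lra|].
    split; [lra|]. eapply Rle_lt_trans; [apply velocity_lipschitz|]. lra.
Qed.
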